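(* Let $k\in\{0,1,-1\}$ and consider the system for real functions $\hat H=(H_1,H_2,H_3)^T$, $\hat h=(h_1,h_2,h_3)^T$: $$\frac{d\hat H}{dt}=\hat H\times\hat\Omega+\hat h\times\hat a,\qquad \frac{d\hat h}{dt}=\hat h\times\hat\Omega+k\,(\hat H\times\hat a),$$ with $\hat a=(1,0,0)^T$ and $\hat\Omega=(H_1/2,H_2/2,H_3)^T$. Along a solution put $x=\tfrac12(H_1+iH_2)$, $y=h_1+ih_2$, $x_3=H_3$, $y_3=h_3$, and $q=x^2-(y-k)$. Let $H=x\bar x+\tfrac12x_3^2+\operatorname{Re}y$, $K_2=|y|^2+y_3^2+k(4|x|^2+x_3^2)$, $K_3=2\operatorname{Re}(x\bar y)+x_3y_3$, $K_4^2=|q|^2$ (all constant along the solution), let $\tilde K_2=K_2-k(2H-2k)-k^2-K_4^2$ and $P(X)=\tilde K_2-2K_3X+2HX^2-X^4$. Then along the solution $$-4\Big(\frac{dx}{dt}\Big)^2=P(x(t))+q(t)\big(x(t)-\overline{x(t)}\big)^2.$$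
   Context: $\times$ denotes the vector product in $\mathbb{R}^3$; the bar denotes complex conjugation. The quantities $H,K_2,K_3,K_4^2$ are integrals of motion of the system (Hamiltonian, the two Casimirs $\|\hat h\|^2+k\|\hat H\|^2$ and $\hat h\cdot\hat H$, and the Kowalewski-type integral). *)

From Stdlib Require Import Reals.
From Coquelicot Require Export Coquelicot.
Open Scope R_scope.

(* Vectors of R^3, written as triples ((v1, v2), v3) so that the product
   normed-module structure of Coquelicot applies (derivative = componentwise). *)
Definition vec3 := ((R * R) * R)%type.
Definition mkv (a b c : R) : vec3 := ((a, b), c).
Definition v1 (v : vec3) : R := fst (fst v).
Definition v2 (v : vec3) : R := snd (fst v).
Definition v3 (v : vec3) : R := snd v.

Definition cross (u v : vec3) : vec3 :=
  mkv (v2 u * v3 v - v3 u * v2 v)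
      (v3 u * v1 v - v1 u * v3 v)
      (v1 u * v2 v - v2 u * v1 v).

Definition vadd (u v : vec3) : vec3 := mkv (v1 u + v1 v) (v2 u + v2 v) (v3 u + v3 v).
Definition vscal (k : R) (u : vec3) : vec3 := mkv (k * v1 u) (k * v2 u) (k * v3 u).

Definition a_vec : vec3 := mkv 1 0 0.
Definition Omega (Hv : vec3) : vec3 := mkv (v1 Hv / 2) (v2 Hv / 2) (v3 Hv).

Definition rhs_H (k : R) (Hv hv : vec3) : vec3 :=
  vadd (cross Hv (Omega Hv)) (cross hv a_vec).
Definition rhs_h (k : R) (Hv hv : vec3) : vec3 :=
  vadd (cross hv (Omega Hv)) (vscal k (cross Hv a_vec)).

Definition xC (Hv : vec3) : C := (v1 Hv / 2, v2 Hv / 2).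
Definition yC (hv : vec3) : C := (v1 hv, v2 hv).
Definition x3 (Hv : vec3) : R := v3 Hv.
Definition y3 (hv : vec3) : R := v3 hv.
Definition qC (k : R) (Hv hv : vec3) : C :=
  (xC Hv * xC Hv - (yC hv - RtoC k))%C.

Definition Ham (Hv hv : vec3) : R :=
  Re (xC Hv * Cconj (xC Hv))%C + / 2 * x3 Hv ^ 2 + Re (yC hv).
Definition K2 (k : R) (Hv hv : vec3) : R :=
  Cmod (yC hv) ^ 2 + y3 hv ^ 2 + k * (4 * Cmod (xC Hv) ^ 2 + x3 Hv ^ 2).
Definition K3 (Hv hv : vec3) : R :=
  2 * Re (xC Hv * Cconj (yC hv))%C + x3 Hv * y3 hv.
Definition K4sq (k : R) (Hv hv : vec3) : R := Cmod (qC k Hv hv) ^ 2.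

Definition K2tilde (k : R) (Hv hv : vec3) : R :=
  K2 k Hv hv - k * (2 * Ham Hv hv - 2 * k) - k ^ 2 - K4sq k Hv hv.

Definition Ppoly (k : R) (Hv hv : vec3) (X : C) : C :=
  (RtoC (K2tilde k Hv hv) - RtoC (2 * K3 Hv hv) * X
   + RtoC (2 * Ham Hv hv) * X ^ 2 - X ^ 4)%C.

(** By the first equation of the system, dH1/dt = H2 H3 / 2 and
    dH2/dt = h3 - H1 H3 / 2, so dx/dt = (i/2) (y3 - x3 x) and
    -4 (dx/dt)^2 = (y3 - x3 x)^2.  Once K2~, K3, H and q are written out in
    the six coordinates of H and h, the claim
    (y3 - x3 x)^2 = P(x) + q (x - conj x)^2 is a polynomial identity, valid
    for every real k. *)

From Stdlib Require Import Reals.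
From Coquelicot Require Import Coquelicot.
Open Scope R_scope.

Lemma is_derive_fst {K : AbsRing} {U V : NormedModule K} (f : K -> U * V) x l :
  @is_derive K (prod_NormedModule K U V) f x l ->
  is_derive (fun s => fst (f s)) x (fst l).
Proof.
  intros Hf.
  eapply filterdiff_ext_lin.
  - apply (filterdiff_comp' f (fun p : prod_NormedModule K U V => fst p) x _
             (fun p : prod_NormedModule K U V => fst p) Hf).
    apply filterdiff_linear, is_linear_fst.
  - reflexivity.
Qed.

Lemma is_derive_snd {K : AbsRing} {U V : NormedModule K} (f : K -> U * V) x l :
  @is_derive K (prod_NormedModule K U V) f x l ->
  is_derive (fun s => snd (f s)) x (snd l).
Proof.
  intros Hf.
  eapply filterdiff_ext_lin.
  - apply (filterdiff_comp' f (fun p : prod_NormedModule K U V => snd p) x _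
             (fun p : prod_NormedModule K U V => snd p) Hf).
    apply filterdiff_linear, is_linear_snd.
  - reflexivity.
Qed.

Lemma is_derive_R_unique (f : R -> R) x l l' :
  is_derive f x l -> is_derive f x l' -> l = l'.
Proof.
  intros Hl Hl'.
  now rewrite <- (is_derive_unique _ _ _ Hl), (is_derive_unique _ _ _ Hl').
Qed.

Lemma is_derive_xC_eq (H : R -> vec3) t dH dx :
  is_derive H t dH -> is_derive (fun s => xC (H s)) t dx -> dx = xC dH.
Proof.
  intros HdH Hdx.
  apply injective_projections.
  - apply (is_derive_R_unique (fun s => fst (xC (H s))) t).
    + exact (is_derive_fst _ _ _ Hdx).
    + exact (is_derive_scal_l _ _ _ (/ 2) (is_derive_fst _ _ _ (is_derive_fst _ _ _ HdH))).
  - apply (is_derive_R_unique (fun s => snd (xC (H s))) t).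
    + exact (is_derive_snd _ _ _ Hdx).
    + exact (is_derive_scal_l _ _ _ (/ 2) (is_derive_snd _ _ _ (is_derive_fst _ _ _ HdH))).
Qed.

Lemma xC_rhs_H (k : R) (Hv hv : vec3) :
  xC (rhs_H k Hv hv) = (RtoC (/ 2) * Ci * (RtoC (y3 hv) - RtoC (x3 Hv) * xC Hv))%C.
Proof.
  destruct Hv as [[H1 H2] H3], hv as [[h1 h2] h3].
  unfold rhs_H, vadd, cross, Omega, a_vec, xC, x3, y3, mkv, v1, v2, v3.
  apply injective_projections; simpl; field.
Qed.

Lemma Ppoly_add_qC_eq_sqr (k : R) (Hv hv : vec3) :
  (Ppoly k Hv hv (xC Hv) + qC k Hv hv * (xC Hv - Cconj (xC Hv)) ^ 2
   = (RtoC (y3 hv) - RtoC (x3 Hv) * xC Hv) ^ 2)%C.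
Proof.
  destruct Hv as [[H1 H2] H3], hv as [[h1 h2] h3].
  unfold Ppoly, K2tilde, K4sq, K2, K3, Ham.
  rewrite !Cmod2_alt.
  unfold qC, xC, yC, x3, y3, v1, v2, v3.
  apply injective_projections; simpl; field.
Qed.

Theorem theorem2 (k : R) (hk : k = 0 \/ k = 1 \/ k = -1)
  (t0 t1 : R) (HV hV : R -> vec3)
  (HdH : forall t, t0 < t < t1 -> is_derive HV t (rhs_H k (HV t) (hV t)))
  (Hdh : forall t, t0 < t < t1 -> is_derive hV t (rhs_h k (HV t) (hV t))) :
  forall t, t0 < t < t1 ->
  forall dx : C, is_derive (fun s => xC (HV s)) t dx ->
  (- RtoC 4 * dx ^ 2 =
   Ppoly k (HV t) (hV t) (xC (HV t))
   + qC k (HV t) (hV t) * (xC (HV t) - Cconj (xC (HV t))) ^ 2)%C.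
Proof.
  intros t Ht dx Hdx.
  assert (half_i_sqr : forall w : C, (- RtoC 4 * (RtoC (/ 2) * Ci * w) ^ 2 = w ^ 2)%C).
  { intros [a b]. apply injective_projections; simpl; field. }
  rewrite (is_derive_xC_eq _ _ _ _ (HdH t Ht) Hdx), xC_rhs_H, Ppoly_add_qC_eq_sqr.
  apply half_i_sqr.
Qed.
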